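(* Let $\mathcal{G}$ be an ordered groupoid and let $\alpha=(A_g,\alpha_g)_{g\in\mathcal{G}}$ be a preunital partial ordered (P.O.) action of $\mathcal{G}$ on a ring $A$. Then $\alpha$ has a globalization $\beta$ if and only if $\alpha$ is unital.
   Context: A groupoid $\mathcal{G}$ is a small category in which every morphism is invertible; $\mathcal{G}_0\subseteq\mathcal{G}$ denotes the set of identities (objects), $d(g)=g^{-1}g$, $r(g)=gg^{-1}$, and $\mathcal{G}_2=\{(g,h): gh \text{ is defined}\}$. $\mathcal{G}$ is ordered if it carries a partial order $\le$ such that: (OG1) $g\le h\Rightarrow g^{-1}\le h^{-1}$; (OG2) if $g\le h$, $k\le \ell$, and $gk$, $h\ell$ are defined, then $gk\le h\ell$; (OG3) for $g\in\mathcal{G}$, $e\in\mathcal{G}_0$ with $e\le d(g)$ there is a unique $(g|e)\le g$ with $d(g|e)=e$; (OG3* ) for $e\le r(g)$ there is a unique $(e|g)\le g$ with $r(e|g)=e$. A partial action $\alpha=(A_g,\alpha_g)_{g\in\mathcal{G}}$ of $\mathcal{G}$ on a ring $A$ consists of ideals $A_{r(g)}$ of $A$, ideals $A_g$ of $A_{r(g)}$ and ring isomorphisms $\alpha_g:A_{g^{-1}}\to A_g$ such that: (P1) $\alpha_e=\mathrm{Id}_{A_e}$ for $e\in\mathcal{G}_0$ and $A=\sum_{e\in\mathcal{G}_0}A_e$; (P2) $\alpha_h^{-1}(A_{g^{-1}}\cap A_h)\subseteq A_{(gh)^{-1}}$ for $(g,h)\in\mathcal{G}_2$; (P3) $\alpha_g\alpha_h(a)=\alpha_{gh}(a)$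 for $(g,h)\in\mathcal{G}_2$, $a\in\alpha_h^{-1}(A_{g^{-1}}\cap A_h)$. It is a P.O. action if moreover (PO): $g\le h$ implies $A_g\subseteq A_h$ and $\alpha_g=\alpha_h|_{A_{g^{-1}}}$. It is unital if every $A_g$ is generated by (i.e. equals $A1_g$ for) a central idempotent $1_g$ of $A$; it is preunital if every $A_e$, $e\in\mathcal{G}_0$, is a unital ring whose identity $1_e$ is a central idempotent of $A$. A global action is a partial action with $A_g=A_{r(g)}$ for all $g$; an ordered global action is a global action satisfying (PO). A globalization of a P.O. action $\alpha$ on $A$ is an ordered global action $\beta=(B_g,\beta_g)_{g\in\mathcal{G}}$ of $\mathcal{G}$ on a ring $B$ together with injective ring homomorphisms $\varphi_e:A_e\to B_e$ ($e\in\mathcal{G}_0$) such that: (i) $\varphi_e(A_e)$ is an ideal of $B_e$; (ii) $\varphi_{r(g)}(A_g)=\varphi_{r(g)}(A_{r(g)})\cap\beta_g(\varphi_{d(g)}(A_{d(g)}))$ for all $g$; (iii) $\beta_g\circ\varphi_{d(g)}(a)=\varphi_{r(g)}\circ\alpha_g(a)$ for all $g$, $a\in A_{g^{-1}}$; (iv) $B_g=\sum_{r(h)\le r(g)}\beta_h(\varphi_{d(h)}(A_{d(h)}))$ for all $g$. *)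

From Stdlib Require Import List.
Import ListNotations.

Set Implicit Arguments.
Unset Strict Implicit.

Record Rng := {
  rcar :> Type;
  r0 : rcar;
  radd : rcar -> rcar -> rcar;
  ropp : rcar -> rcar;
  rmul : rcar -> rcar -> rcar;
  raddA : forall x y z, radd x (radd y z) = radd (radd x y) z;
  raddC : forall x y, radd x y = radd y x;
  radd0 : forall x, radd r0 x = x;
  raddN : forall x, radd (ropp x) x = r0;
  rmulA : forall x y z, rmul x (rmul y z) = rmul (rmul x y) z;
  rmulDl : forall x y z, rmul (radd x y) z = radd (rmul x z) (rmul y z);
  rmulDr : forall x y z, rmul x (radd y z) = radd (rmul x y) (rmul x z)
}.
Arguments r0 {r}.
Arguments radd {r}.
Arguments ropp {r}.
Arguments rmul {r}.

Definition fsum {R : Rng} (l : list R) : R := fold_right radd r0 l.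

Definition span {R : Rng} (S : R -> Prop) (x : R) : Prop :=
  exists l : list R, Forall S l /\ x = fsum l.

Definition image {R R' : Rng} (f : R -> R') (S : R -> Prop) (y : R') : Prop :=
  exists x, S x /\ y = f x.

Definition is_ideal_in {R : Rng} (S I : R -> Prop) : Prop :=
  (forall x, I x -> S x) /\ I r0 /\
  (forall x y, I x -> I y -> I (radd x y)) /\
  (forall x, I x -> I (ropp x)) /\
  (forall x y, S x -> I y -> I (rmul x y) /\ I (rmul y x)).

Definition is_ideal {R : Rng} (I : R -> Prop) : Prop :=
  is_ideal_in (fun _ => True) I.

Definition ring_mono_on {R R' : Rng} (f : R -> R') (D : R -> Prop) (C : R' -> Prop) : Prop :=
  (forall x, D x -> C (f x)) /\
  (forall x y, D x -> D y -> f (radd x y) = radd (f x) (f y)) /\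
  (forall x y, D x -> D y -> f (rmul x y) = rmul (f x) (f y)) /\
  (forall x y, D x -> D y -> f x = f y -> x = y).

Definition ring_iso_on {R R' : Rng} (f : R -> R') (D : R -> Prop) (C : R' -> Prop) : Prop :=
  ring_mono_on f D C /\ (forall y, C y -> exists x, D x /\ f x = y).

Definition central {R : Rng} (u : R) : Prop := forall a : R, rmul a u = rmul u a.

(** * Groupoids: small categories in which every morphism is invertible.
    [comp g h] is the product [gh] ("g after h"), meaningful when
    [src g = tgt h]; identities are the arrows [idm x]. *)
Record groupoid := {
  Ob : Type;
  Arr : Type;
  src : Arr -> Ob;
  tgt : Arr -> Ob;
  idm : Ob -> Arr;
  comp : Arr -> Arr -> Arr;
  ginv : Arr -> Arr;
  src_idm : forall x, src (idm x) = x;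
  tgt_idm : forall x, tgt (idm x) = x;
  src_comp : forall g h, src g = tgt h -> src (comp g h) = src h;
  tgt_comp : forall g h, src g = tgt h -> tgt (comp g h) = tgt g;
  comp_idr : forall g, comp g (idm (src g)) = g;
  comp_idl : forall g, comp (idm (tgt g)) g = g;
  compA : forall f g h, src f = tgt g -> src g = tgt h ->
            comp f (comp g h) = comp (comp f g) h;
  src_inv : forall g, src (ginv g) = tgt g;
  tgt_inv : forall g, tgt (ginv g) = src g;
  comp_inv_r : forall g, comp g (ginv g) = idm (tgt g);
  comp_inv_l : forall g, comp (ginv g) g = idm (src g)
}.

Section GroupoidNotions.
Variable G : groupoid.

Definition G0 (e : Arr G) : Prop := exists x, e = idm x.
(** d(g) = g^{-1} g,  r(g) = g g^{-1} *)
Definition dd (g : Arr G) : Arr G := idm (src g).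
Definition rr (g : Arr G) : Arr G := idm (tgt g).
Definition composable (g h : Arr G) : Prop := src g = tgt h.

Definition ordered_groupoid (le : Arr G -> Arr G -> Prop) : Prop :=
  (forall g, le g g) /\
  (forall g h, le g h -> le h g -> g = h) /\
  (forall g h k, le g h -> le h k -> le g k) /\
  (forall g h, le g h -> le (ginv g) (ginv h)) /\
  (forall g h k l, le g h -> le k l -> composable g k -> composable h l ->
       le (comp g k) (comp h l)) /\
  (forall g e, G0 e -> le e (dd g) -> exists! h, le h g /\ dd h = e) /\
  (forall g e, G0 e -> le e (rr g) -> exists! h, le h g /\ rr h = e).

Definition partial_action (A : Rng) (Aset : Arr G -> A -> Prop)
    (al : Arr G -> A -> A) : Prop :=
  (forall g, is_ideal (Aset (rr g))) /\
  (forall g, is_ideal_in (Aset (rr g)) (Aset g)) /\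
  (forall g, ring_iso_on (al g) (Aset (ginv g)) (Aset g)) /\
  (forall e, G0 e -> forall a, Aset e a -> al e a = a) /\
  (forall a : A, span (fun x => exists e, G0 e /\ Aset e x) a) /\
  (forall g h, composable g h -> forall a,
      Aset (ginv h) a -> Aset (ginv g) (al h a) -> Aset h (al h a) ->
      Aset (ginv (comp g h)) a) /\
  (forall g h, composable g h -> forall a,
      Aset (ginv h) a -> Aset (ginv g) (al h a) -> Aset h (al h a) ->
      al g (al h a) = al (comp g h) a).

Definition po_condition (le : Arr G -> Arr G -> Prop) (A : Rng)
    (Aset : Arr G -> A -> Prop) (al : Arr G -> A -> A) : Prop :=
  forall g h, le g h ->
    (forall x, Aset g x -> Aset h x) /\
    (forall x, Aset (ginv g) x -> al g x = al h x).

Definition po_action (le : Arr G -> Arr G -> Prop) (A : Rng)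
    (Aset : Arr G -> A -> Prop) (al : Arr G -> A -> A) : Prop :=
  partial_action Aset al /\ po_condition le Aset al.

Definition unital_action (A : Rng) (Aset : Arr G -> A -> Prop) : Prop :=
  forall g, exists u : A, central u /\ rmul u u = u /\
    (forall x, Aset g x <-> exists a : A, x = rmul a u).

Definition preunital (A : Rng) (Aset : Arr G -> A -> Prop) : Prop :=
  forall e, G0 e -> exists u : A, Aset e u /\
    (forall x, Aset e x -> rmul u x = x /\ rmul x u = x) /\
    central u /\ rmul u u = u.

Definition ordered_global_action (le : Arr G -> Arr G -> Prop) (B : Rng)
    (Bset : Arr G -> B -> Prop) (be : Arr G -> B -> B) : Prop :=
  partial_action Bset be /\
  (forall g x, Bset g x <-> Bset (rr g) x) /\
  po_condition le Bset be.

Definition has_globalization (le : Arr G -> Arr G -> Prop) (A : Rng)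
    (Aset : Arr G -> A -> Prop) (al : Arr G -> A -> A) : Prop :=
  exists (B : Rng) (Bset : Arr G -> B -> Prop) (be : Arr G -> B -> B)
         (phi : Arr G -> A -> B),
    ordered_global_action le Bset be /\
    (forall e, G0 e -> ring_mono_on (phi e) (Aset e) (Bset e)) /\
    (forall e, G0 e -> is_ideal_in (Bset e) (image (phi e) (Aset e))) /\
    (forall g y, image (phi (rr g)) (Aset g) y <->
        (image (phi (rr g)) (Aset (rr g)) y /\
         image (be g) (image (phi (dd g)) (Aset (dd g))) y)) /\
    (forall g a, Aset (ginv g) a -> be g (phi (dd g) a) = phi (rr g) (al g a)) /\
    (forall g y, Bset g y <->
        span (fun z => exists h a, le (rr h) (rr g) /\ Aset (dd h) a /\
                                   z = be h (phi (dd h) a)) y).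

End GroupoidNotions.

(* A globalization forces unitality: for an arrow [g], the element
   [q = beta_g (phi_{d(g)} 1_{d(g)})] is a central idempotent of [B_{r(g)}], and
   condition (ii) says that [A_g] is the preimage under [phi_{r(g)}] of
   [phi_{r(g)}(A_{r(g)}) q]; as [phi_{r(g)}(A_{r(g)})] is an ideal of [B_{r(g)}], the
   preimage [1_g] of [phi_{r(g)}(1_{r(g)}) q] is a central idempotent with [A_g = A 1_g].

   Conversely, for a unital action the maps [act g a = alpha_g (a 1_{g^-1})] are ring
   endomorphisms of [A] with [act g (act h a) = act (gh) a 1_g].  The globalization
   lives in the ring of [A]-valued functions on arrows: it is spanned by the functions
   [lift h a : k |-> act (k^-1 h) a] supported on the arrows [k] with [r(k) = r(h)], and
   [beta g] precomposes with [k |-> g'^-1 k], where [g' <= g] is the restriction of [g]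
   to the range of [k], unique by axiom OG3*. *)

From Stdlib Require Import List Classical ClassicalEpsilon.
From Stdlib Require Import FunctionalExtensionality ProofIrrelevance.
Import ListNotations.

(** * Rings, ideals and spans *)

Section RngTheory.
Context {R : Rng}.
Implicit Types x y z : R.

Lemma raddr0 x : radd x r0 = x.
Proof. rewrite raddC; apply radd0. Qed.

Lemma raddrN x : radd x (ropp x) = r0.
Proof. rewrite raddC; apply raddN. Qed.

Lemma raddrI x y z : radd x y = radd x z -> y = z.
Proof.
  intro H. rewrite <- (radd0 y), <- (radd0 z), <- (raddN x), <- !raddA, H.
  reflexivity.
Qed.

Lemma radd_idem_eq0 x : radd x x = x -> x = r0.
Proof. intro H. apply (raddrI x). rewrite H, raddr0. reflexivity. Qed.

Lemma rmul0r x : rmul r0 x = r0.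
Proof. apply radd_idem_eq0. rewrite <- rmulDl, radd0. reflexivity. Qed.

Lemma rmulr0 x : rmul x r0 = r0.
Proof. apply radd_idem_eq0. rewrite <- rmulDr, radd0. reflexivity. Qed.

Lemma ropp_unique x y : radd y x = r0 -> y = ropp x.
Proof.
  intro H. apply (raddrI x). rewrite (raddC x y), H, raddrN. reflexivity.
Qed.

Lemma rmulNr x y : rmul (ropp x) y = ropp (rmul x y).
Proof. apply ropp_unique. rewrite <- rmulDl, raddN, rmul0r. reflexivity. Qed.

Lemma ropp0 : ropp (r0 : R) = r0.
Proof. symmetry. apply ropp_unique. apply radd0. Qed.

Lemma roppD x y : ropp (radd x y) = radd (ropp x) (ropp y).
Proof.
  symmetry; apply ropp_unique.
  rewrite (raddC x y), raddA, <- (raddA (ropp x)), raddN, raddr0, raddN.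
  reflexivity.
Qed.

Lemma span_ind (P Q : R -> Prop) :
  Q r0 -> (forall x y, Q x -> Q y -> Q (radd x y)) -> (forall x, P x -> Q x) ->
  forall x, span P x -> Q x.
Proof. intros H0 HD HP x [l [Hl ->]]. induction Hl; simpl; auto. Qed.

Lemma span0 (P : R -> Prop) : span P r0.
Proof. exists []. split; auto. Qed.

Lemma spanD (P : R -> Prop) x y : span P x -> span P y -> span P (radd x y).
Proof.
  intros [l1 [H1 ->]] [l2 [H2 ->]]. exists (l1 ++ l2). split.
  - apply Forall_app; auto.
  - clear H1. induction l1 as [|z l1 IH]; simpl.
    + rewrite radd0; reflexivity.
    + rewrite <- raddA, IH; reflexivity.
Qed.

Lemma mem_span (P : R -> Prop) x : P x -> span P x.
Proof. intro H. exists [x]. split; auto. simpl. rewrite raddr0; reflexivity. Qed.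

Lemma sub_span (P Q : R -> Prop) :
  (forall x, P x -> Q x) -> forall x, span P x -> span Q x.
Proof.
  intros H. apply span_ind; auto using span0, spanD. intros; apply mem_span; auto.
Qed.

Lemma spanN (P : R -> Prop) :
  (forall x, P x -> span P (ropp x)) -> forall x, span P x -> span P (ropp x).
Proof.
  intros H. apply span_ind with (Q := fun x => span P (ropp x)); auto.
  - rewrite ropp0; apply span0.
  - intros x y Hx Hy; rewrite roppD; apply spanD; auto.
Qed.

Lemma span_mul (P P' Q : R -> Prop) :
  (forall x y, P x -> P' y -> span Q (rmul x y)) ->
  forall x y, span P x -> span P' y -> span Q (rmul x y).
Proof.
  intros H x y Hx Hy. revert x Hx.
  apply span_ind with (Q := fun x => span Q (rmul x y)).
  - rewrite rmul0r; apply span0.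
  - intros x z Hx Hz; rewrite rmulDl; apply spanD; auto.
  - intros x Hx. revert y Hy.
    apply span_ind with (Q := fun y => span Q (rmul x y)).
    + rewrite rmulr0; apply span0.
    + intros y z Hy Hz; rewrite rmulDr; apply spanD; auto.
    + auto.
Qed.

Lemma ideal_self (I : R -> Prop) : is_ideal I -> is_ideal_in I I.
Proof. intros (_ & H0 & HD & HN & HM). repeat split; auto; apply HM; auto. Qed.

Lemma ideal_mull (I : R -> Prop) a y : is_ideal I -> I y -> I (rmul a y).
Proof. intros (_ & _ & _ & _ & HM) Hy. exact (proj1 (HM a y Logic.I Hy)). Qed.

End RngTheory.

Section AdditiveMaps.
Context {R R' : Rng} (f : R -> R').
Hypothesis fD : forall x y, f (radd x y) = radd (f x) (f y).

Lemma additive0 : f r0 = r0.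
Proof. apply radd_idem_eq0. rewrite <- fD, radd0. reflexivity. Qed.

Lemma additiveN x : f (ropp x) = ropp (f x).
Proof. apply ropp_unique. rewrite <- fD, raddN. apply additive0. Qed.

End AdditiveMaps.

Lemma span_additive_eq {R R' : Rng} (f g : R -> R') (P : R -> Prop) :
  (forall x y, f (radd x y) = radd (f x) (f y)) ->
  (forall x y, g (radd x y) = radd (g x) (g y)) ->
  (forall x, P x -> f x = g x) -> forall x, span P x -> f x = g x.
Proof.
  intros fD gD HP. apply span_ind; auto.
  - rewrite (additive0 f fD), (additive0 g gD). reflexivity.
  - intros x y Hx Hy. rewrite fD, gD, Hx, Hy. reflexivity.
Qed.

Lemma iso_unit {R R' : Rng} (f : R -> R') (D : R -> Prop) (C : R' -> Prop) e u :
  (forall x y, D x -> D y -> f (rmul x y) = rmul (f x) (f y)) ->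
  (forall x, D x -> C (f x)) -> D e -> (forall x, D x -> rmul x e = x) ->
  (forall y, C y -> rmul u y = y) -> (exists t, D t /\ f t = u) -> f e = u.
Proof.
  intros fM fC De He Hu [t [Dt <-]].
  rewrite <- (Hu (f e)), <- fM by auto. rewrite He; auto.
Qed.

Definition is_unit_of {R : Rng} (D : R -> Prop) (u : R) : Prop :=
  D u /\ forall x, D x -> rmul u x = x /\ rmul x u = x.

Lemma iso_central {R S : Rng} (f : R -> S) (D : R -> Prop) (C : S -> Prop) z :
  ring_iso_on f D C -> D z -> (forall x, D x -> rmul x z = rmul z x) ->
  forall y, C y -> rmul y (f z) = rmul (f z) y.
Proof.
  intros ((_ & _ & fM & _) & fsurj) Dz Hz y Cy.
  destruct (fsurj y Cy) as (x & Dx & <-). rewrite <- !fM, Hz by auto. reflexivity.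
Qed.

Section IdealEmbedding.
Context {R S : Rng} (f : R -> S) (D : R -> Prop) (C : S -> Prop).
Hypothesis Hf : ring_mono_on f D C.
Hypothesis Himg : is_ideal_in C (image f D).

Lemma unit_image_central u : is_unit_of D u ->
  forall b, C b -> rmul b (f u) = rmul (f u) b.
Proof.
  destruct Hf as (_ & _ & fM & _). destruct Himg as (_ & _ & _ & _ & HI).
  intros [Du Hu] b Cb.
  destruct (HI b (f u) Cb (ex_intro _ u (conj Du eq_refl)))
    as [(y1 & Dy1 & E1) (y2 & Dy2 & E2)].
  assert (L1 : rmul (f u) (rmul b (f u)) = rmul b (f u)).
  { rewrite E1, <- fM by auto. f_equal. apply Hu; auto. }
  assert (L2 : rmul (rmul (f u) b) (f u) = rmul (f u) b).
  { rewrite E2, <- fM by auto. f_equal. apply Hu; auto. }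
  rewrite <- L1, <- L2 at 1. apply rmulA.
Qed.

(* [c] is the preimage of [f u * q]. *)
Lemma pullback_central_idempotent u q :
  is_ideal D -> is_unit_of D u -> central u ->
  C q -> rmul q q = q -> (forall b, C b -> rmul b q = rmul q b) ->
  exists c, D c /\ central c /\ rmul c c = c /\
            forall y, D y -> f (rmul y c) = rmul (f y) q.
Proof.
  destruct Hf as (fC & _ & fM & finj). destruct Himg as (_ & _ & _ & _ & HI).
  intros HD [Du Hu] Hcu Cq Hqq Hqc.
  destruct (HI q (f u) Cq (ex_intro _ u (conj Du eq_refl))) as [_ (c & Dc & Ec)].
  assert (HDl : forall a y, D y -> D (rmul a y)) by (intros; apply ideal_mull; auto).
  assert (Hyc : forall y, D y -> f (rmul y c) = rmul (f y) q).
  { intros y Dy. rewrite fM, <- Ec, rmulA, <- fM, (proj2 (Hu y Dy)) by auto. reflexivity. }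
  assert (Hcy : forall y, D y -> rmul y c = rmul c y).
  { intros y Dy. apply finj; auto. rewrite Hyc, fM, <- Ec by auto.
    rewrite <- rmulA, <- Hqc, rmulA, <- fM, (proj1 (Hu y Dy)) by auto. reflexivity. }
  exists c. repeat split; auto.
  - intro a. destruct (Hu c Dc) as [Euc Ecu].
    rewrite <- Euc, rmulA, (Hcy (rmul a u)), <- rmulA, <- Hcu, rmulA by auto.
    reflexivity.
  - apply finj; auto. rewrite Hyc, <- Ec, <- rmulA, Hqq by auto. reflexivity.
Qed.

End IdealEmbedding.

(** * Groupoids *)

Ltac endpoints :=
  repeat first
    [ rewrite src_inv | rewrite tgt_inv | rewrite src_idm | rewrite tgt_idm
    | rewrite src_comp by (endpoints; congruence)
    | rewrite tgt_comp by (endpoints; congruence) ];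
  try congruence.

Section GroupoidTheory.
Context {G : groupoid}.
Implicit Types g h k : Arr G.

Lemma compKg g k : src g = tgt k -> comp (ginv g) (comp g k) = k.
Proof.
  intro H. rewrite compA by endpoints. rewrite comp_inv_l, H. apply comp_idl.
Qed.

Lemma ginvK g : ginv (ginv g) = g.
Proof.
  rewrite <- (comp_idr (ginv (ginv g))), src_inv, tgt_inv.
  rewrite <- (comp_inv_l g), compA by endpoints.
  rewrite comp_inv_l, src_inv. apply comp_idl.
Qed.

Lemma compKVg g k : tgt g = tgt k -> comp g (comp (ginv g) k) = k.
Proof.
  intro H. rewrite <- (ginvK g) at 1. apply compKg. endpoints.
Qed.

Lemma ginv_idm (x : Ob G) : ginv (idm x) = idm x.
Proof.
  rewrite <- (comp_idr (ginv (idm x))), src_inv, tgt_idm.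
  pose proof (comp_inv_l (idm x)) as H. rewrite src_idm in H. exact H.
Qed.

Lemma ginv_comp g h : src g = tgt h -> ginv (comp g h) = comp (ginv h) (ginv g).
Proof.
  intro Hgh.
  assert (E : comp (comp g h) (comp (ginv h) (ginv g)) = idm (tgt g)).
  { rewrite <- compA by endpoints. rewrite compKVg by endpoints. apply comp_inv_r. }
  rewrite <- (compKg (comp g h) (comp (ginv h) (ginv g))) by endpoints.
  rewrite E, <- (tgt_comp Hgh), <- src_inv. symmetry. apply comp_idr.
Qed.

Lemma compgK g k : src k = tgt g -> comp (comp k g) (ginv g) = k.
Proof.
  intro H. rewrite <- compA by endpoints. rewrite comp_inv_r, <- H. apply comp_idr.
Qed.

Lemma idm_inj (x y : Ob G) : idm x = idm y -> x = y.
Proof. intro H. rewrite <- (src_idm x), <- (src_idm y), H. reflexivity. Qed.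

Lemma rr_inv g : rr (ginv g) = dd g.
Proof. unfold rr, dd. endpoints. Qed.

Lemma dd_inv g : dd (ginv g) = rr g.
Proof. unfold rr, dd. endpoints. Qed.

Lemma rr_rr g : rr (rr g) = rr g.
Proof. unfold rr. endpoints. Qed.

Lemma rr_comp g h : src g = tgt h -> rr (comp g h) = rr g.
Proof. intro; unfold rr; endpoints. Qed.

Lemma dd_comp g h : src g = tgt h -> dd (comp g h) = dd h.
Proof. intro; unfold dd; endpoints. Qed.

Lemma G0_rr g : G0 (rr g).
Proof. exists (tgt g); reflexivity. Qed.

Lemma G0_dd g : G0 (dd g).
Proof. exists (src g); reflexivity. Qed.

Lemma G0_rr_id (e : Arr G) : G0 e -> rr e = e.
Proof. intros [x ->]. unfold rr. endpoints. Qed.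

Lemma G0_dd_id (e : Arr G) : G0 e -> dd e = e.
Proof. intros [x ->]. unfold dd. endpoints. Qed.

Lemma G0_inv (e : Arr G) : G0 e -> ginv e = e.
Proof. intros [x ->]. apply ginv_idm. Qed.

End GroupoidTheory.

Section OrderedGroupoidTheory.
Context {G : groupoid} (le : Arr G -> Arr G -> Prop).
Hypothesis Hog : ordered_groupoid le.
Implicit Types g h k : Arr G.

Lemma le_refl g : le g g.
Proof. apply Hog. Qed.

Lemma le_trans g h k : le g h -> le h k -> le g k.
Proof. destruct Hog as (_ & _ & H & _). apply H. Qed.

Lemma le_inv g h : le g h -> le (ginv g) (ginv h).
Proof. destruct Hog as (_ & _ & _ & H & _). apply H. Qed.

Lemma le_comp g h k l :
  le g h -> le k l -> src g = tgt k -> src h = tgt l -> le (comp g k) (comp h l).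
Proof. destruct Hog as (_ & _ & _ & _ & H & _). apply H. Qed.

Lemma le_rr g h : le g h -> le (rr g) (rr h).
Proof.
  intro H. unfold rr. rewrite <- !comp_inv_r.
  apply le_comp; auto using le_inv; endpoints.
Qed.

Lemma le_dd g h : le g h -> le (dd g) (dd h).
Proof.
  intro H. unfold dd. rewrite <- !comp_inv_l.
  apply le_comp; auto using le_inv; endpoints.
Qed.

Lemma le_eq_tgt g1 g2 g : le g1 g -> le g2 g -> tgt g1 = tgt g2 -> g1 = g2.
Proof.
  destruct Hog as (_ & _ & _ & _ & _ & _ & H). intros H1 H2 H12.
  destruct (H g (rr g1) (G0_rr g1) (le_rr _ _ H1)) as [k [_ Hk]].
  transitivity k; [symmetry|]; apply Hk; unfold rr; rewrite ?H12; auto.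
Qed.

Lemma le_eq_src g1 g2 g : le g1 g -> le g2 g -> src g1 = src g2 -> g1 = g2.
Proof.
  destruct Hog as (_ & _ & _ & _ & _ & H & _). intros H1 H2 H12.
  destruct (H g (dd g1) (G0_dd g1) (le_dd _ _ H1)) as [k [_ Hk]].
  transitivity k; [symmetry|]; apply Hk; unfold dd; rewrite ?H12; auto.
Qed.

Lemma le_restrict g h : le (rr h) (dd g) -> exists g', le g' g /\ src g' = tgt h.
Proof.
  destruct Hog as (_ & _ & _ & _ & _ & H & _). intro Hle.
  destruct (H g (rr h) (G0_rr h) Hle) as [k [[Hk Hkh] _]].
  exists k. split; auto. apply idm_inj. exact Hkh.
Qed.

End OrderedGroupoidTheory.

(** * Unital partial actions *)

Section UnitalPartialAction.
Context {G : groupoid} {A : Rng} (Aset : Arr G -> A -> Prop) (al : Arr G -> A -> A).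
Hypothesis Hpa : partial_action Aset al.
Hypothesis Hu : unital_action Aset.
Implicit Types g h k : Arr G.

Definition one g : A := proj1_sig (constructive_indefinite_description _ (Hu g)).

Lemma one_spec g :
  central (one g) /\ rmul (one g) (one g) = one g /\
  (forall x, Aset g x <-> exists a, x = rmul a (one g)).
Proof. unfold one. destruct constructive_indefinite_description as [u Hu']. exact Hu'. Qed.

Lemma one_central g a : rmul a (one g) = rmul (one g) a.
Proof. apply one_spec. Qed.

Lemma mul_one_idem x g : rmul (rmul x (one g)) (one g) = rmul x (one g).
Proof. destruct (one_spec g) as (_ & Hi & _). rewrite <- rmulA, Hi. reflexivity. Qed.

Lemma Aset_iff g x : Aset g x <-> rmul x (one g) = x.
Proof.
  destruct (one_spec g) as (_ & _ & ->). split.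
  - intros [a ->]. apply mul_one_idem.
  - intro H. exists x. auto.
Qed.

Lemma one_mulr g x : Aset g x -> rmul x (one g) = x.
Proof. apply Aset_iff. Qed.

Lemma one_mull g x : Aset g x -> rmul (one g) x = x.
Proof. rewrite <- one_central. apply one_mulr. Qed.

Lemma mul_ones_swap x g h :
  rmul (rmul x (one g)) (one h) = rmul (rmul x (one h)) (one g).
Proof. rewrite <- !rmulA, (one_central g). reflexivity. Qed.

Lemma Aset_mull g a x : Aset g x -> Aset g (rmul a x).
Proof. rewrite !Aset_iff. intro H. rewrite <- rmulA, H. reflexivity. Qed.

Lemma Aset_mulr g a x : Aset g x -> Aset g (rmul x a).
Proof.
  rewrite !Aset_iff. intro H. rewrite <- rmulA, one_central, rmulA, H. reflexivity.
Qed.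

Lemma Aset_one g : Aset g (one g).
Proof. apply Aset_iff, one_spec. Qed.

Lemma Aset_mul_one g a : Aset g (rmul a (one g)).
Proof. apply Aset_mull, Aset_one. Qed.

Lemma Aset0 g : Aset g r0.
Proof. apply Aset_iff, rmul0r. Qed.

Lemma AsetD g x y : Aset g x -> Aset g y -> Aset g (radd x y).
Proof. rewrite !Aset_iff. intros Hx Hy. rewrite rmulDl, Hx, Hy. reflexivity. Qed.

Lemma AsetN g x : Aset g x -> Aset g (ropp x).
Proof. rewrite !Aset_iff. intro H. rewrite rmulNr, H. reflexivity. Qed.

Lemma Aset_rr g x : Aset g x -> Aset (rr g) x.
Proof. destruct Hpa as (_ & H & _). apply H. Qed.

Lemma Aset_inv_dd g x : Aset (ginv g) x -> Aset (dd g) x.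
Proof. rewrite <- rr_inv. apply Aset_rr. Qed.

Lemma al_in g x : Aset (ginv g) x -> Aset g (al g x).
Proof. destruct Hpa as (_ & _ & H & _). apply H. Qed.

Lemma alD g x y :
  Aset (ginv g) x -> Aset (ginv g) y -> al g (radd x y) = radd (al g x) (al g y).
Proof. destruct Hpa as (_ & _ & H & _). apply H. Qed.

Lemma alM g x y :
  Aset (ginv g) x -> Aset (ginv g) y -> al g (rmul x y) = rmul (al g x) (al g y).
Proof. destruct Hpa as (_ & _ & H & _). apply H. Qed.

Lemma al_id e x : G0 e -> Aset e x -> al e x = x.
Proof. destruct Hpa as (_ & _ & _ & H & _). intros; apply H; auto. Qed.

Lemma al_comp_dom g h x : src g = tgt h ->
  Aset (ginv h) x -> Aset (ginv g) (al h x) -> Aset (ginv (comp g h)) x.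
Proof. destruct Hpa as (_ & _ & _ & _ & _ & H & _). eauto using al_in. Qed.

Lemma al_comp g h x : src g = tgt h ->
  Aset (ginv h) x -> Aset (ginv g) (al h x) -> al g (al h x) = al (comp g h) x.
Proof. destruct Hpa as (_ & _ & _ & _ & _ & _ & H). eauto using al_in. Qed.

Lemma alK g x : Aset (ginv g) x -> al (ginv g) (al g x) = x.
Proof.
  intro H. rewrite al_comp; [| endpoints | auto | rewrite ginvK; auto using al_in].
  rewrite comp_inv_l. apply (al_id (dd g)); auto using G0_dd, Aset_inv_dd.
Qed.

Lemma alVK g y : Aset g y -> al g (al (ginv g) y) = y.
Proof. intro H. pose proof (alK (ginv g) y) as K. rewrite ginvK in K. auto. Qed.

Lemma al_dom_comp g h x : src g = tgt h ->
  Aset (ginv h) x -> Aset (ginv (comp g h)) x -> Aset (ginv g) (al h x).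
Proof.
  intros Hgh Hx Hgx.
  rewrite <- (compgK h g Hgh). apply al_comp_dom; endpoints.
  - rewrite ginvK. auto using al_in.
  - rewrite alK; auto.
Qed.

Lemma al_one_one g h : src g = tgt h ->
  al h (rmul (one (ginv h)) (one (ginv (comp g h)))) = rmul (one h) (one (ginv g)).
Proof.
  intro Hgh.
  apply iso_unit with (D := fun x => Aset (ginv h) x /\ Aset (ginv (comp g h)) x)
                      (C := fun y => Aset h y /\ Aset (ginv g) y).
  - intros x y [Hx _] [Hy _]. auto using alM.
  - intros x [Hx Hgx]. split; auto using al_in, al_dom_comp.
  - split; [apply Aset_mulr | apply Aset_mull]; apply Aset_one.
  - intros x [Hx Hgx]. rewrite rmulA, (one_mulr _ x Hx), (one_mulr _ x Hgx). reflexivity.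
  - intros y [Hy Hgy]. rewrite <- rmulA, (one_mull _ y Hgy), (one_mull _ y Hy). reflexivity.
  - assert (Hu' : Aset h (rmul (one h) (one (ginv g)))) by auto using Aset_mulr, Aset_one.
    exists (al (ginv h) (rmul (one h) (one (ginv g)))). repeat split.
    + apply al_in. rewrite ginvK. auto.
    + apply al_comp_dom; auto. apply al_in. rewrite ginvK. auto.
      rewrite alVK by auto. auto using Aset_mull, Aset_one.
    + apply alVK; auto.
Qed.

Definition act g a : A := al g (rmul a (one (ginv g))).

Lemma act_in g a : Aset g (act g a).
Proof. apply al_in, Aset_mul_one. Qed.

Lemma act_al g a : Aset (ginv g) a -> act g a = al g a.
Proof. intro H. unfold act. rewrite one_mulr; auto. Qed.

Lemma act_id e a : G0 e -> Aset e a -> act e a = a.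
Proof. intros He Ha. rewrite act_al, al_id; rewrite ?G0_inv; auto. Qed.

Lemma actD g a b : act g (radd a b) = radd (act g a) (act g b).
Proof. unfold act. rewrite rmulDl. apply alD; apply Aset_mul_one. Qed.

Lemma actN g a : act g (ropp a) = ropp (act g a).
Proof. apply additiveN, actD. Qed.

Lemma actM g a b : act g (rmul a b) = rmul (act g a) (act g b).
Proof.
  unfold act. rewrite <- alM by apply Aset_mul_one. f_equal.
  rewrite rmulA, <- (rmulA a (one _) b), <- (one_central _ b), rmulA, mul_one_idem.
  reflexivity.
Qed.

Lemma act_dd g a : act g (rmul a (one (dd g))) = act g a.
Proof.
  unfold act. rewrite <- rmulA, one_mull; auto using Aset_inv_dd, Aset_one.
Qed.

(* [alpha_h] matches the units of [A_{h^-1} ∩ A_{(gh)^-1}] and [A_h ∩ A_{g^-1}]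
   ([al_one_one]); multiplying by them brings (P3) into play. *)
Lemma act_comp g h a : src g = tgt h ->
  act g (act h a) = rmul (act (comp g h) a) (one g).
Proof.
  intro Hgh. unfold act at 1 2.
  set (w := rmul a (one (ginv h))).
  set (z := rmul w (rmul (one (ginv h)) (one (ginv (comp g h))))).
  assert (Hw : Aset (ginv h) w) by apply Aset_mul_one.
  assert (Ehz : al h z = rmul (al h w) (one (ginv g))).
  { unfold z. rewrite alM, al_one_one, rmulA, (one_mulr h); auto using al_in.
    apply Aset_mulr, Aset_one. }
  assert (Hz : Aset (ginv h) z) by (apply Aset_mulr; exact Hw).
  rewrite <- Ehz, al_comp; auto; [| rewrite Ehz; apply Aset_mul_one].
  assert (Ez : z = rmul (rmul a (one (ginv (comp g h))))
                        (rmul (one (ginv (comp g h))) (one (ginv h)))).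
  { unfold z, w. rewrite !rmulA, !mul_one_idem. apply mul_ones_swap. }
  pose proof (al_one_one (ginv g) (comp g h) ltac:(endpoints)) as E1.
  rewrite compKg, ginvK in E1 by endpoints.
  rewrite Ez, alM, E1, rmulA by (apply Aset_mul_one || apply Aset_mulr, Aset_one).
  change (al (comp g h) (rmul a (one (ginv (comp g h))))) with (act (comp g h) a).
  rewrite (one_mulr (comp g h)) by apply act_in. reflexivity.
Qed.

Lemma act_comp_dom g h a : src g = tgt h -> Aset (ginv h) a ->
  act g (act h a) = act (comp g h) a.
Proof.
  intros Hgh Ha.
  assert (Ea : act (ginv h) (act h a) = a).
  { rewrite (act_al (ginv h)), act_al by (rewrite ?ginvK; auto using act_in).
    apply alK; auto. }
  rewrite act_comp by auto. apply one_mulr.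
  rewrite <- Ea, act_comp, compgK by endpoints. apply Aset_mulr, act_in.
Qed.

(** * The globalization of a unital partial action *)

Section Construction.
Variable le : Arr G -> Arr G -> Prop.
Hypothesis Hog : ordered_groupoid le.

Definition fun_rng : Rng.
Proof.
  refine {| rcar := Arr G -> A; r0 := fun _ => r0;
            radd := fun f f' k => radd (f k) (f' k); ropp := fun f k => ropp (f k);
            rmul := fun f f' k => rmul (f k) (f' k) |};
  intros; apply functional_extensionality; intros.
  - apply raddA.
  - apply raddC.
  - apply radd0.
  - apply raddN.
  - apply rmulA.
  - apply rmulDl.
  - apply rmulDr.
Defined.

Lemma fun_ext (f f' : fun_rng) : (forall k, f k = f' k) -> f = f'.
Proof. apply functional_extensionality. Qed.

(* [lift h a] models [beta_h (phi_{d(h)} a)] ([beB_phiB]); in particular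
   [phi_e] is [lift e]. *)
Definition lift h a : fun_rng := fun k =>
  if excluded_middle_informative (tgt k = tgt h) then act (comp (ginv k) h) a else r0.

Definition beta g (f : fun_rng) : fun_rng := fun k =>
  match excluded_middle_informative (exists g', le g' g /\ tgt g' = tgt k) with
  | left H => f (comp (ginv (proj1_sig (constructive_indefinite_description _ H))) k)
  | right _ => r0
  end.

Lemma lift_at h a k : tgt k = tgt h -> lift h a k = act (comp (ginv k) h) a.
Proof. intro H. unfold lift. destruct excluded_middle_informative; tauto. Qed.

Lemma lift_off h a k : tgt k <> tgt h -> lift h a k = r0.
Proof. intro H. unfold lift. destruct excluded_middle_informative; tauto. Qed.

Lemma lift_at_rr h a : lift h a (rr h) = act h a.
Proof.
  unfold rr. rewrite lift_at, ginv_idm, comp_idl by endpoints. reflexivity.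
Qed.

Lemma beta_at g g' f k : le g' g -> tgt g' = tgt k -> beta g f k = f (comp (ginv g') k).
Proof.
  intros H1 H2. unfold beta. destruct excluded_middle_informative as [H|H].
  - destruct (constructive_indefinite_description _ H) as [g1 [Hg1 Hg1k]]. simpl.
    rewrite (le_eq_tgt le Hog g1 g' g); congruence.
  - exfalso; eauto.
Qed.

Lemma beta_off g f k : ~ (exists g', le g' g /\ tgt g' = tgt k) -> beta g f k = r0.
Proof. intro H. unfold beta. destruct excluded_middle_informative; tauto. Qed.

Lemma betaD g f f' : beta g (radd f f') = radd (beta g f) (beta g f').
Proof.
  apply fun_ext; intro k. unfold beta; simpl.
  destruct excluded_middle_informative; auto. symmetry; apply radd0.
Qed.

Lemma betaM g f f' : beta g (rmul f f') = rmul (beta g f) (beta g f').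
Proof.
  apply fun_ext; intro k. unfold beta; simpl.
  destruct excluded_middle_informative; auto. symmetry; apply rmul0r.
Qed.

Lemma liftD h a b : lift h (radd a b) = radd (lift h a) (lift h b).
Proof.
  apply fun_ext; intro k; simpl. destruct (classic (tgt k = tgt h)).
  - rewrite !lift_at by auto. apply actD.
  - rewrite !lift_off by auto. symmetry; apply radd0.
Qed.

Lemma liftN h a : lift h (ropp a) = ropp (lift h a).
Proof.
  apply fun_ext; intro k; simpl. destruct (classic (tgt k = tgt h)).
  - rewrite !lift_at by auto. apply actN.
  - rewrite !lift_off by auto. symmetry; apply ropp0.
Qed.

Lemma lift0 h : lift h r0 = r0.
Proof. apply additive0, liftD. Qed.

Lemma lift_dd h a : lift h (rmul a (one (dd h))) = lift h a.
Proof.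
  apply fun_ext; intro k. destruct (classic (tgt k = tgt h)).
  - rewrite !lift_at, <- (dd_comp (ginv k) h) by endpoints. apply act_dd.
  - rewrite !lift_off by auto. reflexivity.
Qed.

Lemma act_lift_comp h h' k a : tgt h = tgt h' -> tgt k = tgt h' ->
  act (comp (ginv k) h') (act (comp (ginv h') h) a) =
  rmul (act (comp (ginv k) h) a) (one (comp (ginv k) h')).
Proof.
  intros Hh Hk. rewrite act_comp, <- compA, compKVg by endpoints. reflexivity.
Qed.

Lemma lift_mul h h' a a' : tgt h = tgt h' ->
  rmul (lift h a) (lift h' a') = lift h' (rmul (act (comp (ginv h') h) a) a').
Proof.
  intro Hh. apply fun_ext; intro k; simpl. destruct (classic (tgt k = tgt h')).
  - rewrite !lift_at by congruence.
    rewrite actM, act_lift_comp, <- rmulA, one_mull by auto using act_in.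
    reflexivity.
  - rewrite !lift_off by congruence. apply rmul0r.
Qed.

Lemma lift_mulr h h' a a' : tgt h = tgt h' ->
  rmul (lift h' a') (lift h a) = lift h' (rmul a' (act (comp (ginv h') h) a)).
Proof.
  intro Hh. apply fun_ext; intro k; simpl. destruct (classic (tgt k = tgt h')).
  - rewrite !lift_at by congruence.
    rewrite actM, act_lift_comp, one_central, rmulA, one_mulr by auto using act_in.
    reflexivity.
  - rewrite !lift_off by congruence. apply rmul0r.
Qed.

Lemma lift_mul0 h h' a a' : tgt h <> tgt h' -> rmul (lift h a) (lift h' a') = r0.
Proof.
  intro Hh. apply fun_ext; intro k; simpl. destruct (classic (tgt k = tgt h)).
  - rewrite (lift_off h') by congruence. apply rmulr0.
  - rewrite lift_off by auto. apply rmul0r.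
Qed.

Lemma lift_beta g g' h a : le g' g -> src g' = tgt h ->
  beta g (lift h a) = lift (comp g' h) a.
Proof.
  intros Hle Hg'h. apply fun_ext; intro k.
  destruct (classic (exists g1, le g1 g /\ tgt g1 = tgt k)) as [[g1 [Hg1 Hk]] | N].
  - rewrite (beta_at g g1) by auto.
    destruct (classic (tgt k = tgt g')) as [E | E].
    + replace g1 with g' by (apply (le_eq_tgt le Hog g' g1 g); congruence).
      rewrite !lift_at, ginv_comp, ginvK by endpoints.
      f_equal. symmetry. apply compA; endpoints.
    + rewrite (lift_off (comp g' h)) by endpoints.
      apply lift_off. rewrite tgt_comp, tgt_inv by endpoints. intro Hs.
      apply E. rewrite <- Hk. f_equal. apply (le_eq_src le Hog g1 g' g); congruence.
  - rewrite beta_off by auto. symmetry. apply lift_off. intro E. apply N.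
    exists g'. split; auto. rewrite E. endpoints.
Qed.

Lemma lift_beta_off g h a : (forall g', le g' g -> src g' <> tgt h) ->
  beta g (lift h a) = r0.
Proof.
  intro H. apply fun_ext; intro k.
  destruct (classic (exists g1, le g1 g /\ tgt g1 = tgt k)) as [[g1 [Hg1 Hk]] | N].
  - rewrite (beta_at g g1) by auto. apply lift_off. endpoints. apply H; auto.
  - apply beta_off; auto.
Qed.

Lemma beta_lift_le g h a : le (rr h) (dd g) ->
  exists g', le g' g /\ src g' = tgt h /\ beta g (lift h a) = lift (comp g' h) a.
Proof.
  intro Hle. destruct (le_restrict le Hog g h Hle) as [g' [Hg' Hs]].
  exists g'. repeat split; auto. apply lift_beta; auto.
Qed.

Definition lifts (P : Arr G -> Prop) (f : fun_rng) : Prop :=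
  exists h a, P h /\ f = lift h a.

Definition inB : fun_rng -> Prop := span (lifts (fun _ => True)).

Definition Bspan e : fun_rng -> Prop := span (lifts (fun h => le (rr h) e)).

Lemma lifts_spanN P f : span (lifts P) f -> span (lifts P) (ropp f).
Proof.
  apply spanN. intros x (h & a & Ph & ->). apply mem_span.
  exists h, (ropp a). split; auto. symmetry. apply liftN.
Qed.

Lemma lifts_span_mull P Q f f' :
  span (lifts Q) f -> span (lifts P) f' -> span (lifts P) (rmul f f').
Proof.
  apply span_mul. intros x y (h & a & _ & ->) (h' & a' & Ph' & ->).
  destruct (classic (tgt h = tgt h')).
  - rewrite lift_mul by auto. apply mem_span. eexists h', _. split; eauto.
  - rewrite lift_mul0 by auto. apply span0.
Qed.

Lemma lifts_span_mulr P Q f f' :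
  span (lifts P) f' -> span (lifts Q) f -> span (lifts P) (rmul f' f).
Proof.
  intros Hf' Hf. revert f' f Hf' Hf. apply span_mul.
  intros y x (h' & a' & Ph' & ->) (h & a & _ & ->).
  destruct (classic (tgt h = tgt h')).
  - rewrite lift_mulr by auto. apply mem_span. eexists h', _. split; eauto.
  - rewrite lift_mul0 by congruence. apply span0.
Qed.

Lemma Bspan_inB e f : Bspan e f -> inB f.
Proof. apply sub_span. intros x (h & a & _ & ->). exists h, a. auto. Qed.

Lemma Bspan_le e e' f : le e e' -> Bspan e f -> Bspan e' f.
Proof.
  intro H. apply sub_span. intros x (h & a & Hh & ->).
  exists h, a. split; auto. eapply le_trans; eauto.
Qed.

Lemma lift_Bspan h a : Bspan (rr h) (lift h a).
Proof. apply mem_span. exists h, a. split; auto. apply le_refl; auto. Qed.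

Lemma beta0 g : beta g r0 = r0.
Proof. apply additive0, betaD. Qed.

Lemma inB_beta g f : inB f -> inB (beta g f).
Proof.
  revert f. apply span_ind.
  - rewrite beta0. apply span0.
  - intros x y Hx Hy. rewrite betaD. apply spanD; auto.
  - intros x (h & a & _ & ->).
    destruct (classic (exists g', le g' g /\ src g' = tgt h)) as [[g' [Hg' Hs]] | N].
    + rewrite (lift_beta g g') by auto. apply mem_span. exists (comp g' h), a. auto.
    + rewrite lift_beta_off by eauto. apply span0.
Qed.

Lemma beta_Bspan g f : Bspan (dd g) f -> Bspan (rr g) (beta g f).
Proof.
  revert f. apply span_ind.
  - rewrite beta0. apply span0.
  - intros x y Hx Hy. rewrite betaD. apply spanD; auto.
  - intros x (h & a & Hh & ->).
    destruct (beta_lift_le g h a Hh) as (g' & Hg' & Hs & ->).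
    apply (Bspan_le (rr (comp g' h))); [| apply lift_Bspan].
    rewrite rr_comp by auto. apply le_rr; auto.
Qed.

Lemma betaK g f : Bspan (dd g) f -> beta (ginv g) (beta g f) = f.
Proof.
  revert f. apply (span_additive_eq _ (fun f => f)).
  - intros x y. rewrite !betaD. reflexivity.
  - reflexivity.
  - intros x (h & a & Hh & ->).
    destruct (beta_lift_le g h a Hh) as (g' & Hg' & Hs & ->).
    rewrite (lift_beta _ (ginv g')); [| apply le_inv; auto | endpoints].
    rewrite compKg by auto. reflexivity.
Qed.

Lemma beta_id e f : G0 e -> Bspan e f -> beta e f = f.
Proof.
  intro He. revert f. apply (span_additive_eq _ (fun f => f)); [apply betaD | reflexivity |].
  intros x (h & a & Hh & ->).
  rewrite (lift_beta e (rr h)); [| auto | unfold rr; endpoints].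
  unfold rr. rewrite comp_idl. reflexivity.
Qed.

Lemma beta_comp g h f : src g = tgt h -> Bspan (dd h) f ->
  beta g (beta h f) = beta (comp g h) f.
Proof.
  intro Hgh. revert f. apply span_additive_eq.
  - intros x y. rewrite !betaD. reflexivity.
  - apply betaD.
  - intros x (k & a & Hk & ->).
    destruct (beta_lift_le h k a Hk) as (h' & Hh' & Hs & ->).
    assert (Hle : le (rr (comp h' k)) (dd g)).
    { rewrite rr_comp by auto. unfold dd. rewrite Hgh. apply le_rr; auto. }
    destruct (beta_lift_le g _ a Hle) as (g' & Hg' & Hs' & ->).
    assert (Hg'h' : src g' = tgt h') by (rewrite Hs'; endpoints).
    rewrite (lift_beta _ (comp g' h')); [| apply le_comp; auto | endpoints].
    rewrite compA by auto. reflexivity.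
Qed.

Lemma beta_le g h f : le g h -> Bspan (dd g) f -> beta g f = beta h f.
Proof.
  intro Hgh. revert f. apply span_additive_eq; [apply betaD | apply betaD |].
  intros x (k & a & Hk & ->).
  destruct (beta_lift_le g k a Hk) as (g' & Hg' & Hs & ->).
  symmetry. apply lift_beta; auto. eapply le_trans; eauto.
Qed.

Lemma inB_lift h a : inB (lift h a).
Proof. apply mem_span. exists h, a. auto. Qed.

Definition Bcar : Type := {f : fun_rng | inB f}.

Lemma Bval_inj (x y : Bcar) : proj1_sig x = proj1_sig y -> x = y.
Proof.
  destruct x as [x Hx], y as [y Hy]; simpl; intros ->. f_equal. apply proof_irrelevance.
Qed.

Definition Brng : Rng.
Proof.
  refine {| rcar := Bcar; r0 := exist _ r0 (span0 _);
    radd := fun x y => exist _ (radd (proj1_sig x) (proj1_sig y))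
                             (spanD _ _ _ (proj2_sig x) (proj2_sig y));
    ropp := fun x => exist _ (ropp (proj1_sig x)) (lifts_spanN _ _ (proj2_sig x));
    rmul := fun x y => exist _ (rmul (proj1_sig x) (proj1_sig y))
                             (lifts_span_mull _ _ _ _ (proj2_sig x) (proj2_sig y)) |};
  intros; apply Bval_inj; cbn [proj1_sig].
  - apply (raddA (r := fun_rng)).
  - apply (raddC (r := fun_rng)).
  - apply (radd0 (r := fun_rng)).
  - apply (raddN (r := fun_rng)).
  - apply (rmulA (r := fun_rng)).
  - apply (rmulDl (r := fun_rng)).
  - apply (rmulDr (r := fun_rng)).
Defined.

Definition beB g (b : Brng) : Brng :=
  exist _ (beta g (proj1_sig b)) (inB_beta g _ (proj2_sig b)).

Definition phiB h a : Brng := exist _ (lift h a) (inB_lift h a).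

Definition Bset g (b : Brng) : Prop := Bspan (rr g) (proj1_sig b).

Lemma Bset_rr g : Bset (rr g) = Bset g.
Proof. unfold Bset. rewrite rr_rr. reflexivity. Qed.

Lemma Bset_G0 e b : G0 e -> Bset e b <-> Bspan e (proj1_sig b).
Proof. intro He. unfold Bset. rewrite G0_rr_id by auto. reflexivity. Qed.

Lemma Bset_inv g b : Bset (ginv g) b <-> Bspan (dd g) (proj1_sig b).
Proof. unfold Bset. rewrite rr_inv. reflexivity. Qed.

Lemma span_val (P : fun_rng -> Prop) : (forall f, P f -> inB f) ->
  forall b : Brng, span P (proj1_sig b) <-> span (fun z : Brng => P (proj1_sig z)) b.
Proof.
  intros HP b. split.
  - intro Hb.
    assert (H : inB (proj1_sig b) /\ forall b' : Brng, proj1_sig b' = proj1_sig b ->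
                  span (fun z : Brng => P (proj1_sig z)) b').
    { revert Hb. generalize (proj1_sig b). apply span_ind.
      - split; [apply span0 |]. intros b' Hb'.
        replace b' with (r0 : Brng) by (apply Bval_inj; auto). apply span0.
      - intros x y [Hx IHx] [Hy IHy]. split; [apply spanD; auto |]. intros b' Hb'.
        replace b' with (radd (exist _ x Hx : Brng) (exist _ y Hy)) by (apply Bval_inj; auto).
        apply spanD; auto.
      - intros x Hx. split; auto. intros b' Hb'. apply mem_span. rewrite Hb'. auto. }
    apply H. reflexivity.
  - revert b.
    apply (span_ind (fun z : Brng => P (proj1_sig z)) (fun z => span P (proj1_sig z))).
    + apply span0.
    + intros x y Hx Hy. exact (spanD P _ _ Hx Hy).
    + intros x Hx. apply mem_span. exact Hx.
Qed.

Lemma Bset_ideal g : is_ideal (Bset g).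
Proof.
  unfold Bset, Bspan. split; [auto |]. split; [apply span0 |].
  split; [intros x y Hx Hy; exact (spanD _ _ _ Hx Hy) |].
  split; [intros x Hx; exact (lifts_spanN _ _ Hx) |].
  intros x y _ Hy. split.
  - exact (lifts_span_mull _ _ _ _ (proj2_sig x) Hy).
  - exact (lifts_span_mulr _ _ _ _ Hy (proj2_sig x)).
Qed.

Lemma beB_iso g : ring_iso_on (beB g) (Bset (ginv g)) (Bset g).
Proof.
  repeat split.
  - intros x Hx. apply beta_Bspan, Bset_inv, Hx.
  - intros x y _ _. apply Bval_inj, betaD.
  - intros x y _ _. apply Bval_inj, betaM.
  - intros x y Hx Hy Hxy. apply Bset_inv in Hx, Hy. apply Bval_inj.
    rewrite <- (betaK g _ Hx), <- (betaK g _ Hy).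
    apply (f_equal (@proj1_sig _ _)) in Hxy. cbn [beB proj1_sig] in Hxy.
    rewrite Hxy. reflexivity.
  - intros y Hy. unfold Bset in Hy. rewrite <- dd_inv in Hy.
    exists (beB (ginv g) y). split.
    + apply Bset_inv. rewrite <- rr_inv. apply beta_Bspan. exact Hy.
    + apply Bval_inj. simpl. rewrite <- (ginvK g) at 1. apply betaK. exact Hy.
Qed.

Lemma B_partial_action : partial_action Bset beB.
Proof.
  split; [| split; [| split; [| split; [| split; [| split]]]]].
  - intro g. apply Bset_ideal.
  - intro g. rewrite Bset_rr. apply ideal_self, Bset_ideal.
  - apply beB_iso.
  - intros e He b Hb. apply Bval_inj. apply beta_id, Bset_G0; auto.
  - intro b.
    apply (sub_span (fun z : Brng => exists e, G0 e /\ Bspan e (proj1_sig z))).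
    { intros x (e & He & H). exists e. split; auto. apply Bset_G0; auto. }
    apply (span_val (fun f => exists e, G0 e /\ Bspan e f)).
    { intros f (e & _ & H). eapply Bspan_inB; eauto. }
    apply (sub_span (lifts (fun _ => True))); [| exact (proj2_sig b)].
    intros x (h & a & _ & ->). exists (rr h). split; [apply G0_rr | apply lift_Bspan].
  - intros g h Hgh b Hb _ _. apply Bset_inv. apply Bset_inv in Hb.
    rewrite dd_comp; auto.
  - intros g h Hgh b Hb _ _. apply Bval_inj. apply beta_comp; auto. apply Bset_inv, Hb.
Qed.

Lemma B_ordered_global : ordered_global_action le Bset beB.
Proof.
  split; [apply B_partial_action | split].
  - intros g x. rewrite Bset_rr. reflexivity.
  - intros g h Hgh. split.
    + intros x Hx. eapply Bspan_le; eauto. apply le_rr; auto.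
    + intros x Hx. apply Bset_inv in Hx. apply Bval_inj. apply beta_le; auto.
Qed.

Lemma lift_mul_G0 e a b : G0 e -> Aset e a ->
  rmul (lift e a) (lift e b) = lift e (rmul a b).
Proof.
  intros He Ha. rewrite lift_mul, comp_inv_l by reflexivity.
  fold (dd e). rewrite G0_dd_id, act_id by auto. reflexivity.
Qed.

Lemma lift_G0_at e a : G0 e -> Aset e a -> lift e a e = a.
Proof.
  intros He Ha. rewrite lift_at, comp_inv_l by reflexivity.
  fold (dd e). rewrite G0_dd_id by auto. apply act_id; auto.
Qed.

Lemma lift_al g a : Aset (ginv g) a -> lift g a = lift (rr g) (al g a).
Proof.
  intro Ha. apply fun_ext; intro k. destruct (classic (tgt k = tgt g)) as [Hk | Hk].
  - rewrite !lift_at by (unfold rr; endpoints). unfold rr. rewrite <- Hk, <- (src_inv k).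
    rewrite comp_idr, <- act_al, act_comp_dom by (endpoints; auto). reflexivity.
  - rewrite !lift_off by (unfold rr; endpoints). reflexivity.
Qed.

Lemma Bspan_lift_ideal e a f : G0 e -> Aset e a -> Bspan e f ->
  (exists c, Aset e c /\ rmul f (lift e a) = lift e c) /\
  (exists c, Aset e c /\ rmul (lift e a) f = lift e c).
Proof.
  intros He Ha. revert f. apply span_ind.
  - split; exists r0; split; auto using Aset0; rewrite lift0.
    + apply (rmul0r (R := fun_rng)).
    + apply (rmulr0 (R := fun_rng)).
  - intros x y [[c1 [Hc1 E1]] [d1 [Hd1 F1]]] [[c2 [Hc2 E2]] [d2 [Hd2 F2]]].
    split; [exists (radd c1 c2) | exists (radd d1 d2)]; split; auto using AsetD;
      rewrite liftD, <- ?E1, <- ?E2, <- ?F1, <- ?F2.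
    + apply rmulDl.
    + apply rmulDr.
  - intros x (h & a' & Hh & ->). destruct (classic (tgt h = tgt e)) as [E | E].
    + rewrite lift_mul, lift_mulr by auto.
      split; eexists; (split; [| reflexivity]); auto using Aset_mull, Aset_mulr.
    + rewrite lift_mul0, (lift_mul0 e h) by auto.
      split; exists r0; rewrite lift0; auto using Aset0.
Qed.

Lemma beB_phiB h a : beB h (phiB (dd h) a) = phiB h a.
Proof.
  apply Bval_inj. simpl.
  rewrite (lift_beta h h); [| apply le_refl; auto | unfold dd; endpoints].
  unfold dd. rewrite comp_idr. reflexivity.
Qed.

Lemma phiB_mono e : G0 e -> ring_mono_on (phiB e) (Aset e) (Bset e).
Proof.
  intro He. repeat split.
  - intros a _. apply lift_Bspan.
  - intros a b _ _. apply Bval_inj, liftD.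
  - intros a b Ha _. apply Bval_inj. symmetry. apply lift_mul_G0; auto.
  - intros a b Ha Hb Hab. apply (f_equal (fun z : Brng => proj1_sig z e)) in Hab.
    cbn [phiB proj1_sig] in Hab. rewrite !lift_G0_at in Hab; auto.
Qed.

Lemma phiB_ideal e : G0 e -> is_ideal_in (Bset e) (image (phiB e) (Aset e)).
Proof.
  intro He. split; [| split; [| split; [| split]]].
  - intros x (a & _ & ->). apply lift_Bspan.
  - exists r0. split; auto using Aset0. apply Bval_inj. symmetry. apply lift0.
  - intros x y (a & Ha & ->) (b & Hb & ->). exists (radd a b). split; auto using AsetD.
    apply Bval_inj. symmetry. apply liftD.
  - intros x (a & Ha & ->). exists (ropp a). split; auto using AsetN.
    apply Bval_inj. symmetry. apply liftN.
  - intros x y Hx (a & Ha & ->). apply (Bset_G0 e) in Hx; auto.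
    destruct (Bspan_lift_ideal e a _ He Ha Hx) as [(c1 & Hc1 & E1) (c2 & Hc2 & E2)].
    split; [exists c1 | exists c2]; split; auto; apply Bval_inj; [exact E1 | exact E2].
Qed.

Lemma phiB_intersection g y :
  image (phiB (rr g)) (Aset g) y <->
  image (phiB (rr g)) (Aset (rr g)) y /\ image (beB g) (image (phiB (dd g)) (Aset (dd g))) y.
Proof.
  split.
  - intros (b & Hb & ->). split; [exists b; auto using Aset_rr |].
    assert (Hb' : Aset (ginv (ginv g)) b) by (rewrite ginvK; auto).
    exists (phiB (dd g) (al (ginv g) b)). split.
    + exists (al (ginv g) b). split; auto using Aset_inv_dd, al_in.
    + rewrite beB_phiB. apply Bval_inj. simpl. rewrite (lift_al g), alVK; auto using al_in.
  - intros [(b & Hb & ->) (x & (a & Ha & ->) & Hy)]. exists b. split; auto.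
    rewrite beB_phiB in Hy. apply (f_equal (fun z : Brng => proj1_sig z (rr g))) in Hy.
    cbn [phiB proj1_sig] in Hy. rewrite lift_G0_at, lift_at_rr in Hy; auto using G0_rr.
    rewrite Hy. apply act_in.
Qed.

Lemma Bset_lifts g y : Bset g y <->
  span (fun z => exists h a, le (rr h) (rr g) /\ Aset (dd h) a /\
                             z = beB h (phiB (dd h) a)) y.
Proof.
  unfold Bset, Bspan. rewrite span_val by (intros f (h & a & _ & ->); apply inB_lift).
  split; apply sub_span.
  - intros z (h & a & Hh & Hz). exists h, (rmul a (one (dd h))).
    repeat split; auto using Aset_mul_one.
    rewrite beB_phiB. apply Bval_inj. simpl. rewrite lift_dd. exact Hz.
  - intros z (h & a & Hh & _ & ->). exists h, a. split; auto.
    rewrite beB_phiB. reflexivity.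
Qed.

Lemma globalization_exists : has_globalization le Aset al.
Proof.
  exists Brng, Bset, beB, phiB.
  split; [exact B_ordered_global |].
  split; [exact phiB_mono |].
  split; [exact phiB_ideal |].
  split; [exact phiB_intersection |].
  split; [| exact Bset_lifts].
  intros g a Ha. rewrite beB_phiB. apply Bval_inj. apply lift_al; auto.
Qed.

End Construction.
End UnitalPartialAction.

(** * A globalization forces unitality *)

Section GlobalizationIsUnital.
Context {G : groupoid} {A B : Rng} (Aset : Arr G -> A -> Prop) (al : Arr G -> A -> A)
  (Bs : Arr G -> B -> Prop) (be : Arr G -> B -> B) (phi : Arr G -> A -> B).
Hypothesis Hpa : partial_action Aset al.
Hypothesis Hglob : forall g x, Bs g x <-> Bs (rr g) x.
Hypothesis Hiso : forall g, ring_iso_on (be g) (Bs (ginv g)) (Bs g).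
Hypothesis Hmono : forall e, G0 e -> ring_mono_on (phi e) (Aset e) (Bs e).
Hypothesis Hideal : forall e, G0 e -> is_ideal_in (Bs e) (image (phi e) (Aset e)).
Hypothesis Hcap : forall g y, image (phi (rr g)) (Aset g) y <->
  image (phi (rr g)) (Aset (rr g)) y /\ image (be g) (image (phi (dd g)) (Aset (dd g))) y.

Variables (g : Arr G) (u : A).
Hypothesis Hu : is_unit_of (Aset (dd g)) u.

Let q : B := be g (phi (dd g) u).

Lemma Bs_inv x : Bs (ginv g) x <-> Bs (dd g) x.
Proof. rewrite Hglob, rr_inv. reflexivity. Qed.

Lemma phi_unit_in : Bs (ginv g) (phi (dd g) u).
Proof. apply Bs_inv. apply (Hmono (dd g) (G0_dd g)), Hu. Qed.

Lemma transported_unit_in : Bs (rr g) q.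
Proof. apply (Hglob g), (Hiso g), phi_unit_in. Qed.

Lemma transported_unit_idem : rmul q q = q.
Proof.
  destruct (Hiso g) as ((_ & _ & beM & _) & _).
  destruct (Hmono (dd g) (G0_dd g)) as (_ & _ & phiM & _).
  destruct Hu as [Hu_in Hu_unit].
  unfold q. rewrite <- beM, <- phiM by auto using phi_unit_in.
  rewrite (proj1 (Hu_unit u Hu_in)). reflexivity.
Qed.

Lemma transported_unit_central b : Bs (rr g) b -> rmul b q = rmul q b.
Proof.
  intro Hb. apply (iso_central (be g) (Bs (ginv g)) (Bs g)); auto using phi_unit_in.
  - intros x Hx. apply Bs_inv in Hx.
    apply (unit_image_central (phi (dd g)) (Aset (dd g)) (Bs (dd g))); auto using G0_dd.
  - apply (Hglob g), Hb.
Qed.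

Lemma transported_unit_absorbs y :
  image (be g) (image (phi (dd g)) (Aset (dd g))) y -> rmul y q = y.
Proof.
  destruct (Hiso g) as ((_ & _ & beM & _) & _).
  destruct (Hmono (dd g) (G0_dd g)) as (phiC & _ & phiM & _).
  destruct Hu as [Hu_in Hu_unit].
  intros (x & (a & Ha & ->) & ->).
  assert (Hx : Bs (ginv g) (phi (dd g) a)) by (apply Bs_inv; auto).
  unfold q. rewrite <- beM, <- phiM by auto using phi_unit_in.
  rewrite (proj2 (Hu_unit a Ha)). reflexivity.
Qed.

Lemma transported_unit_mul b : Bs (rr g) b ->
  image (be g) (image (phi (dd g)) (Aset (dd g))) (rmul b q).
Proof.
  destruct (Hiso g) as ((_ & _ & beM & _) & besurj).
  destruct (Hideal (dd g) (G0_dd g)) as (_ & _ & _ & _ & HI).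
  intro Hb. destruct (besurj b (proj2 (Hglob g b) Hb)) as (w & Hw & <-).
  assert (Hw' : Bs (dd g) w) by (apply Bs_inv; auto).
  destruct (HI w (phi (dd g) u) Hw' (ex_intro _ u (conj (proj1 Hu) eq_refl))) as [Him _].
  unfold q. rewrite <- beM by auto using phi_unit_in.
  exists (rmul w (phi (dd g) u)). auto.
Qed.

Lemma globalization_unit (u' : A) :
  is_unit_of (Aset (rr g)) u' -> central u' ->
  exists c, central c /\ rmul c c = c /\ (forall x, Aset g x <-> exists a, x = rmul a c).
Proof.
  intros Hu' Hcu'.
  destruct (Hmono (rr g) (G0_rr g)) as (phiC & _ & _ & phiI).
  destruct Hpa as (Hrg & Hsub & _). destruct (Hsub g) as (Hsub_g & _).
  assert (HDl : forall a y, Aset (rr g) y -> Aset (rr g) (rmul a y))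
    by (intros; apply ideal_mull; auto).
  destruct (pullback_central_idempotent (phi (rr g)) (Aset (rr g)) (Bs (rr g))
              (Hmono _ (G0_rr g)) (Hideal _ (G0_rr g)) u' q)
    as (c & Hc & Hcc & Hcidem & Hfc);
    auto using transported_unit_in, transported_unit_idem, transported_unit_central.
  exists c. split; [| split]; auto. intro x. split.
  - intros Hx. exists x. symmetry. apply phiI; auto.
    rewrite Hfc by auto. apply transported_unit_absorbs.
    apply (Hcap g). exists x. auto.
  - intros (a & ->).
    assert (Hac : rmul a c = rmul (rmul a u') c).
    { rewrite <- rmulA, (proj1 (proj2 Hu' c Hc)). reflexivity. }
    assert (Him : image (phi (rr g)) (Aset g) (phi (rr g) (rmul a c))).
    { apply Hcap. split; [exists (rmul a c); auto |].
      rewrite Hac, Hfc by (apply HDl, Hu'). apply transported_unit_mul.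
      apply phiC, HDl, Hu'. }
    destruct Him as (x & Hx & E). rewrite (phiI (rmul a c) x); auto.
Qed.

End GlobalizationIsUnital.

Lemma globalization_unital {G : groupoid} (le : Arr G -> Arr G -> Prop) {A : Rng}
    (Aset : Arr G -> A -> Prop) (al : Arr G -> A -> A) :
  partial_action Aset al -> preunital Aset ->
  has_globalization le Aset al -> unital_action Aset.
Proof.
  intros Hpa Hpu (B & Bs & be & phi & ((Hpb & Hglob & _) & Hmono & Hideal & Hcap & _)) g.
  destruct Hpb as (_ & _ & Hiso & _).
  destruct (Hpu (rr g) (G0_rr g)) as (u' & Hu'in & Hu'unit & Hcu' & _).
  destruct (Hpu (dd g) (G0_dd g)) as (u & Huin & Huunit & _).
  apply globalization_unit with (al := al) (Bs := Bs) (be := be) (phi := phi)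
                              (u := u) (u' := u'); auto; split; auto.
Qed.

Theorem mainTheorem1 (G : groupoid) (le : Arr G -> Arr G -> Prop) (A : Rng)
    (Aset : Arr G -> A -> Prop) (al : Arr G -> A -> A) :
  ordered_groupoid le ->
  po_action le Aset al ->
  preunital Aset ->
  (has_globalization le Aset al <-> unital_action Aset).
Proof.
  intros Hog [Hpa _] Hpu. split.
  - apply globalization_unital; auto.
  - intro Hu. apply globalization_exists; auto.
Qed.
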